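(* Let $f\colon X\to X$ be a piecewise $\lambda$-contraction and $x_0\in X$. If $\Omega(f)\cap S(f)=\emptyset$, then there exists $n\in\mathbb{N}$ such that every regular point of order $n$ of $f$ is a regular point and $\mathscr{C}^{(n)}$ is strongly invariant.
   Context: $(X,d)$ is a compact metric space whose open balls are connected, with $\mathrm{diam}(X)>0$, and $\lambda\in(0,1)$. A piecewise $\lambda$-contraction $f$: there exist $N\in\mathbb{N}$, open connected pairwise disjoint $A_1,\dots,A_N\subset X$ with dense union $X'$, and bi-Lipschitz $\varphi_i\colon X\to X$ with Lipschitz constant $\le\lambda$, $f|_{A_i}=\varphi_i|_{A_i}$; $S(f)=X\setminus X'$. $x$ is regular of order $n$ if $f^j(x)\notin S(f)$ for $0\le j<n$, regular if for all $n$. $\mathcal{I}_n(f)$ is the set of tuples $(i_0,\dots,i_{n-1})$ such that some regular point $x$ of order $n$ has $f^j(x)\in A_{i_j}$ for $0\le j<n$. For $\alpha=(i_0,\dots,i_{n-1})$, $\varphi^\alpha=\varphi_{i_{n-1}}\circ\cdots\circ\varphi_{i_0}$ and $\Omega(f)=\bigcap_{m\ge1}\overline{\bigcup_{n\ge m}\{\varphi^\alpha(x_0):\alpha\in\mathcal{I}_n(f)\}}$. $\mathscr{C}^{(1)}=\{A_i\}$, and for $n\ge2$, $\mathscr{C}^{(n)}$ is the collection of the nonempty open sets $A^\alpha=A_{i_0}\cap\varphi_{i_0}^{-1}(A_{i_1})\cap\cdots\cap(\varphi_{i_{n-2}}\circ\cdots\circ\varphi_{i_0})^{-1}(A_{i_{n-1}})$,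 $\alpha\in\mathcal{I}_n(f)$. A collection $\mathscr{C}$ of finitely many pairwise disjoint subsets of $X$ is strongly invariant if there is $n_0\ge1$ such that: (i) for each $A\in\mathscr{C}$ there is $A'\in\mathscr{C}$ with $f(A)\subset A'$; (ii) for each $B\in\mathscr{C}$ and $n\ge n_0$ there is $B'\in\mathscr{C}$ with $\overline{f^n(B)}\subset B'$; (iii) each $C\in\mathscr{C}$ is contained in some $A_i$. *)

From HB Require Import structures.
From mathcomp Require Import all_boot all_order all_algebra.
From mathcomp Require Import all_classical all_reals all_analysis.
Set Implicit Arguments. Unset Strict Implicit. Unset Printing Implicit Defensive.
Import Order.TTheory GRing.Theory Num.Theory.
Local Open Scope classical_set_scope.
Local Open Scope ring_scope.

Section PiecewiseContraction.
Context {R : realType} {X : metricType R}.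

Definition standing_space : Prop :=
  [/\ compact [set: X],
      (forall (x : X) (e : R), 0 < e -> connected (ball x e)) &
      exists x y : X, 0 < mdist x y].

Definition bilip_contr (lam : R) (phi : X -> X) : Prop :=
  exists2 c : R, 0 < c &
    forall x y : X, c * mdist x y <= mdist (phi x) (phi y) /\
                    mdist (phi x) (phi y) <= lam * mdist x y.

Definition piecewise_contraction (lam : R) (N : nat) (A : 'I_N -> set X)
    (phi : 'I_N -> X -> X) (f : X -> X) : Prop :=
  [/\ (forall i, open (A i) /\ connected (A i)),
      (forall i j, i != j -> A i `&` A j = set0),
      closure (\bigcup_i A i) = [set: X],
      (forall i, bilip_contr lam (phi i)) &
      (forall i x, A i x -> f x = phi i x)].

Variables (N : nat) (A : 'I_N -> set X) (phi : 'I_N -> X -> X) (f : X -> X).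

Definition Xp : set X := \bigcup_i A i.
Definition Sf : set X := ~` Xp.

Definition regular_order (n : nat) (x : X) : Prop :=
  forall j, (j < n)%N -> ~ Sf (iter j f x).
Definition regular (x : X) : Prop := forall n, regular_order n x.

Fixpoint follows (alpha : seq 'I_N) (x : X) : Prop :=
  match alpha with
  | [::] => True
  | i :: a => A i x /\ follows a (f x)
  end.

Definition In (n : nat) : set (seq 'I_N) :=
  [set alpha | size alpha = n /\ exists x, regular_order n x /\ follows alpha x].

Fixpoint phi_seq (alpha : seq 'I_N) (x : X) : X :=
  match alpha with
  | [::] => x
  | i :: a => phi_seq a (phi i x)
  end.

Definition Omega (x0 : X) : set X :=
  \bigcap_(m in [set m : nat | (1 <= m)%N])
    closure (\bigcup_(n in [set n : nat | (m <= n)%N])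
               [set phi_seq alpha x0 | alpha in In n]).

Fixpoint Aalpha (alpha : seq 'I_N) : set X :=
  match alpha with
  | [::] => [set: X]
  | i :: a => A i `&` (phi i @^-1` Aalpha a)
  end.

Definition Cn (n : nat) : set (set X) :=
  [set B | (n = 1%N /\ exists i, B = A i) \/
           ((2 <= n)%N /\ exists2 alpha, In n alpha & B = Aalpha alpha /\ B !=set0)].

Definition strongly_invariant (C : set (set X)) : Prop :=
  [/\ finite_set C,
      (forall B B', C B -> C B' -> B <> B' -> B `&` B' = set0) &
      exists2 n0 : nat, (1 <= n0)%N &
        [/\ (forall B, C B -> exists2 B', C B' & f @` B `<=` B'),
            (forall B n, C B -> (n0 <= n)%N ->
               exists2 B', C B' & closure (iter n f @` B) `<=` B') &
            (forall B, C B -> exists i, B `<=` A i)]].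

End PiecewiseContraction.

(* The points phi^alpha(x0), alpha in I_n, accumulate only on Omega(f), which
   misses the compact set S(f); so for n >= M they stay at a distance eps > 0
   from S(f).  Every phi^alpha with |alpha| = n maps X, which lies within D of
   x0, into the ball of radius lam^n D around phi^alpha(x0).  Once
   2 lam^n D <= eps, the ball of radius 2 lam^n D around phi^alpha(x0) is a
   connected set avoiding S(f), hence lies in a single piece A_j, and phi_j
   maps it into the ball of the next generation.  By induction this ball lies
   in cylinders A^v of every length: itineraries of length n extend forever,
   and each f^m(A^alpha), together with its closure when m >= n, lies in a
   single cylinder of length n. *)

From HB Require Import structures.
From mathcomp Require Import all_boot all_order all_algebra.
From mathcomp Require Import all_classical all_reals all_analysis.
From mathcomp Require Import lra.
Import Order.TTheory GRing.Theory Num.Theory.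
Set Implicit Arguments. Unset Strict Implicit.
Local Open Scope classical_set_scope.
Local Open Scope ring_scope.

Section CompactMetric.
Context {R : realType} {X : metricType R}.
Implicit Types (K : set X) (x y : X).

Lemma compact_mdist_bounded K x0 : compact K ->
  exists D : R, forall x, K x -> mdist x0 x < D.
Proof.
move=> /compact_near_coveringP cK.
have : \forall k \near \oo, K `<=` [set x | mdist x0 x < k%:R].
  apply: (cK nat \oo (fun k x => mdist x0 x < k%:R)) => x _.
  exists (ball x 1, [set k | mdist x0 x + 1 < k%:R]).
    by split; [exact: nbhsx_ballx | exact: nbhs_infty_gtr].
  case=> y k [/= + xk]; rewrite ballEmdist /= => xy.
  by rewrite (le_lt_trans (metric_triangle x0 x y)) // (lt_trans _ xk) // ltrD2l.
by case=> k _ /(_ k (leqnn k)) HK; exists k%:R.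
Qed.

Lemma compact_far_from_limsup K (P : nat -> set X) : compact K ->
  K `&` \bigcap_(m in [set m | (1 <= m)%N])
          closure (\bigcup_(n in [set n | (m <= n)%N]) P n) = set0 ->
  exists M, exists2 e : R, 0 < e &
    forall n, (M <= n)%N -> forall p s, P n p -> K s -> e <= mdist p s.
Proof.
move=> /compact_near_coveringP cK KP0.
(* A single index [k] serves as threshold generation and, via 1/(k+1), as gap. *)
have : \forall k \near \oo, K `<=` [set s | forall n, (k <= n)%N ->
    forall p, P n p -> k.+1%:R^-1 <= mdist p s].
  apply: cK => s Ks.
  have [m m1 /existsNP[B /not_implyP[/nbhs_ballP[e e0 eB] PB0]]] : exists2 m,
      (1 <= m)%N & ~ closure (\bigcup_(n in [set n | (m <= n)%N]) P n) s.
    apply: contrapT => Hs; rewrite -[False]/(set0 s) -KP0; split=> // m m1.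
    by apply: contrapT => ncl; apply: Hs; exists m.
  have e2 : 0 < e / 2 by rewrite divr_gt0.
  exists (ball s (e / 2), [set k | (m <= k)%N /\ k.+1%:R^-1 < e / 2]).
    split; first exact: nbhsx_ballx.
    apply: filterI; first exact: nbhs_infty_ge.
    exact: (near_infty_natSinv_lt (PosNum e2)).
  case=> x k [/= + [mk ke]] n kn p Pp; rewrite ballEmdist /= => sx.
  have esp : e <= mdist s p.
    rewrite leNgt; apply/negP => sp; apply: PB0; exists p; split.
      by exists n => //; rewrite /= (leq_trans mk).
    by apply: eB; rewrite ballEmdist.
  have tri := le_trans esp (metric_triangle s x p).
  rewrite (metric_sym p x) (le_trans (ltW ke)) //; lra.
case=> k _ /(_ k (leqnn k)) HK; exists k, k.+1%:R^-1 => // n kn p s Pp Ks.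
exact: HK Ks n kn p Pp.
Qed.

End CompactMetric.

Section Itineraries.
Context {R : realType} {X : metricType R}.
Variables (N : nat) (A : 'I_N -> set X) (f : X -> X).
Implicit Types (u v w : seq 'I_N) (x y : X).

Lemma follows_cat u v x :
  follows A f (u ++ v) x <-> follows A f u x /\ follows A f v (iter (size u) f x).
Proof.
elim: u x => [|i u IH] x /=; first by split=> // [[]].
by rewrite IH -iterSr; tauto.
Qed.

Lemma follows_regular_order w x : follows A f w x -> regular_order A f (size w) x.
Proof.
elim: w x => [|i w IH] x //= [Ax Fw] [_|j ltjw]; first by apply; exists i.
by rewrite iterSr; exact: IH.
Qed.

Lemma follows_In w x : follows A f w x -> In A f (size w) w.
Proof. by move=> Fw; split=> //; exists x; split=> //; exact: follows_regular_order. Qed.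

Lemma regular_order_follows n x :
  regular_order A f n x -> exists2 w, size w = n & follows A f w x.
Proof.
elim: n x => [|n IH] x Hx; first by exists [::].
have [i _ Ax] : Xp A x by apply: contrapT; exact: (Hx 0%N).
have [|w sw Fw] := IH (f x); first by move=> j ltjn; rewrite -iterSr; exact: Hx.
by exists (i :: w); rewrite /= ?sw.
Qed.

End Itineraries.

Section Cylinders.
Context {R : realType} {X : metricType R}.
Variables (N : nat) (A : 'I_N -> set X) (phi : 'I_N -> X -> X).
Implicit Types (u v w : seq 'I_N) (x y : X).

Lemma Aalpha_cat u v x :
  Aalpha A phi (u ++ v) x <-> Aalpha A phi u x /\ Aalpha A phi v (phi_seq phi u x).
Proof.
elim: u x => [|i u IH] x /=; first by split=> // [[]].
by rewrite /preimage /= IH; tauto.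
Qed.

Lemma phi_seq_rcons w i x : phi_seq phi (rcons w i) x = phi i (phi_seq phi w x).
Proof. by elim: w x => [|j w IH] x //=. Qed.

End Cylinders.

Section PiecewiseItineraries.
Context {R : realType} {X : metricType R}.
Variables (N : nat) (A : 'I_N -> set X) (phi : 'I_N -> X -> X) (f : X -> X).
Implicit Types (u v w : seq 'I_N) (x y : X).

Hypothesis pieces_disjoint : forall i j, i != j -> A i `&` A j = set0.
Hypothesis f_piece : forall i x, A i x -> f x = phi i x.

Lemma followsE w x : follows A f w x <-> Aalpha A phi w x.
Proof.
elim: w x => [|i w IH] x //=; rewrite /preimage /=.
by split=> -[Ax]; rewrite -(f_piece Ax) IH.
Qed.

Lemma iter_Aalpha w x : Aalpha A phi w x -> iter (size w) f x = phi_seq phi w x.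
Proof.
elim: w x => [|i w IH] x // [Ax Aw].
by rewrite iterSr (f_piece Ax) IH.
Qed.

Lemma Aalpha_In w x : Aalpha A phi w x -> In A f (size w) w.
Proof. by move/followsE; exact: follows_In. Qed.

Lemma Aalpha_disjoint u v : size u = size v -> u <> v ->
  Aalpha A phi u `&` Aalpha A phi v = set0.
Proof.
elim: u v => [|i u IH] [|j v] //= [suv] neq; apply/seteqP; split=> // x.
case=> -[Aix Aux] [Ajx Avx]; have [eij|nij] := eqVneq i j; last first.
  by rewrite -(pieces_disjoint nij); split.
rewrite eij in neq Aux; have nuv : u <> v by move=> euv; apply: neq; rewrite euv.
by rewrite -[set0 x]/(set0 (phi j x)) -(IH v suv nuv).
Qed.

End PiecewiseItineraries.

Section Pieces.
Context {R : realType} {X : metricType R}.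
Variables (N : nat) (A : 'I_N -> set X).
Hypothesis pieces_open : forall i, open (A i).
Hypothesis pieces_disjoint : forall i j, i != j -> A i `&` A j = set0.

Lemma closed_Sf : closed (Sf A).
Proof. by apply: open_closedC; apply: bigcup_open => i _. Qed.

Lemma connected_sub_piece (B : set X) :
  connected B -> B !=set0 -> B `<=` Xp A -> exists j, B `<=` A j.
Proof.
move=> cB [b Bb] BX; have [j _ Ajb] := BX b Bb; exists j.
suff <- : B `&` A j = B by move=> y [].
apply: cB; [by exists b | by exists (A j) |].
(* Inside [B], the open piece [A j] is also the complement of the other pieces. *)
exists (~` \bigcup_(i in [set i | i != j]) A i).
  by apply: open_closedC; apply: bigcup_open => i _.
apply/seteqP; split=> y [By Ay]; split=> //.
  case=> i /= nij Aiy; rewrite -[False]/(set0 y) -(pieces_disjoint nij).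
  by split.
have [i _ Aiy] := BX y By; have [<-|nij] := eqVneq i j => //.
by case: Ay; exists i.
Qed.

End Pieces.

Section Contraction.
Context {R : realType} {X : metricType R}.
Variables (lam : R) (N : nat) (phi : 'I_N -> X -> X).
Hypothesis lam_ge0 : 0 <= lam.
Hypothesis phi_lipschitz : forall i x y, mdist (phi i x) (phi i y) <= lam * mdist x y.

Lemma phi_seq_lipschitz w x y :
  mdist (phi_seq phi w x) (phi_seq phi w y) <= lam ^+ size w * mdist x y.
Proof.
elim: w x y => [|i w IH] x y /=; first by rewrite mul1r.
by rewrite (le_trans (IH _ _)) // exprSr -mulrA ler_wpM2l ?exprn_ge0.
Qed.

End Contraction.

Section CylinderCollections.
Context {R : realType} {X : metricType R}.
Variables (N : nat) (A : 'I_N -> set X) (phi : 'I_N -> X -> X) (f : X -> X).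

Lemma CnP n B : (2 <= n)%N -> Cn A phi f n B <->
  exists2 w, In A f n w & B = Aalpha A phi w /\ B !=set0.
Proof. by move=> n2; split=> [[[n1 _]|[_ //]]|Bw]; [rewrite n1 in n2 | right]. Qed.

Lemma Cn_sub_piece n B : Cn A phi f n B -> exists i, B `<=` A i.
Proof.
case=> [[_ [i ->]]|[n2 [[|i w] [sw _] [-> _]]]]; first by exists i.
  by rewrite -sw in n2.
by exists i => x [].
Qed.

Lemma Cn_finite n : (2 <= n)%N -> finite_set (Cn A phi f n).
Proof.
move=> n2; apply: (@sub_finite_set _ _ [set Aalpha A phi t | t in [set: n.-tuple 'I_N]]).
  move=> B /(CnP _ n2) [w [sw _] [-> _]].
  by exists (Tuple (introT eqP sw)).
exact/finite_image/finite_finset.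
Qed.

Hypothesis pieces_disjoint : forall i j, i != j -> A i `&` A j = set0.

Lemma Cn_disjoint n B B' : (2 <= n)%N -> Cn A phi f n B -> Cn A phi f n B' ->
  B <> B' -> B `&` B' = set0.
Proof.
move=> n2 /(CnP _ n2) [u [su _] [-> _]] /(CnP _ n2) [v [sv _] [-> _]] neq.
apply: Aalpha_disjoint => //; first by rewrite su sv.
by move=> euv; rewrite euv in neq.
Qed.

Hypothesis f_piece : forall i x, A i x -> f x = phi i x.

Lemma Aalpha_Cn n w x : (2 <= n)%N -> size w = n -> Aalpha A phi w x ->
  Cn A phi f n (Aalpha A phi w).
Proof.
move=> n2 sw Awx; apply/CnP => //; exists w; last by split=> //; exists x.
by rewrite -sw; exact: Aalpha_In Awx.
Qed.

End CylinderCollections.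

Section Dynamics.
Context {R : realType} {X : metricType R}.
Variables (lam : R) (N : nat) (A : 'I_N -> set X) (phi : 'I_N -> X -> X) (f : X -> X).
Variables (x0 : X) (D eps : R) (n0 : nat).
Hypothesis lam01 : 0 < lam < 1.
Hypothesis pcf : piecewise_contraction lam A phi f.
Hypothesis balls_connected : forall (x : X) e, 0 < e -> connected (ball x e).
Hypothesis D_bound : forall x, mdist x0 x < D.
Hypothesis far_from_Sf : forall w s, (n0 <= size w)%N -> In A f (size w) w ->
  Sf A s -> eps <= mdist (phi_seq phi w x0) s.
Hypothesis radius_small : 2 * (lam ^+ n0 * D) <= eps.

Let pieces_open i : open (A i).
Proof. by case: pcf => /(_ i) []. Qed.

Let pieces_disjoint i j : i != j -> A i `&` A j = set0.
Proof. by case: pcf => _ + _ _ _; apply. Qed.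

Let f_piece i x : A i x -> f x = phi i x.
Proof. by case: pcf => _ _ _ _; apply. Qed.

Let phi_lipschitz i x y : mdist (phi i x) (phi i y) <= lam * mdist x y.
Proof. by case: pcf => _ _ _ /(_ i) [c _ /(_ x y) []]. Qed.

Let lam_gt0 : 0 < lam. Proof. by case/andP: lam01. Qed.
Let lam_le1 : lam <= 1. Proof. by case/andP: lam01 => _ /ltW. Qed.
Let D_gt0 : 0 < D. Proof. by rewrite (le_lt_trans _ (D_bound x0)) ?mdist_ge0. Qed.

Local Notation rad m := (lam ^+ m * D).

Let rad_gt0 m : 0 < rad m.
Proof. by rewrite mulr_gt0 ?exprn_gt0. Qed.

Let ball_rad_sub (c : X) m : ball c (rad m) `<=` ball c (2 * rad m).
Proof. by apply: le_ball; rewrite mulr_natl mulr2n lerDr ltW. Qed.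

Lemma phi_seq_ball w y : ball (phi_seq phi w x0) (rad (size w)) (phi_seq phi w y).
Proof.
have := phi_seq_lipschitz (ltW lam_gt0) phi_lipschitz w x0 y.
rewrite ballEmdist /= => /le_lt_trans; apply.
by rewrite ltr_pM2l ?exprn_gt0.
Qed.

Lemma ball_in_piece w : (n0 <= size w)%N -> In A f (size w) w ->
  exists j, ball (phi_seq phi w x0) (2 * rad (size w)) `<=` A j.
Proof.
move=> n0w Inw; apply: connected_sub_piece => //.
- by apply: balls_connected; rewrite mulr_gt0.
- by exists (phi_seq phi w x0); apply: ballxx; rewrite mulr_gt0.
move=> y; rewrite ballEmdist /= => wy; apply: contrapT => Sy.
have := far_from_Sf n0w Inw Sy; rewrite leNgt => /negP; apply.
apply: (lt_le_trans wy); rewrite (le_trans _ radius_small) // ler_wpM2l //.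
by apply: ler_wpM2r; [exact: ltW | exact: ler_wiXn2l (ltW lam_gt0) lam_le1 _ _ n0w].
Qed.

Lemma In_rcons w j : In A f (size w) w ->
  ball (phi_seq phi w x0) (rad (size w)) `<=` A j -> In A f (size w).+1 (rcons w j).
Proof.
move=> [_ [x [_ Fw]]] wj; rewrite -(size_rcons w j); apply: (follows_In (x := x)).
have Awx : Aalpha A phi w x by apply/(followsE f_piece).
rewrite -cats1; apply/follows_cat; split=> //; split=> //.
by apply: wj; rewrite (iter_Aalpha f_piece Awx); exact: phi_seq_ball.
Qed.

Lemma ball_in_cylinder k w : (n0 <= size w)%N -> In A f (size w) w ->
  exists2 v, size v = k & ball (phi_seq phi w x0) (2 * rad (size w)) `<=` Aalpha A phi v.
Proof.
elim: k w => [|k IH] w n0w Inw; first by exists [::].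
have [j wj] := ball_in_piece n0w Inw.
have Inwj : In A f (size (rcons w j)) (rcons w j).
  by rewrite size_rcons; apply: In_rcons => // y /ball_rad_sub /wj.
have [|v sv wjv] := IH _ _ Inwj; first by rewrite size_rcons leqW.
exists (j :: v); first by rewrite /= sv.
move=> y wy; split; first exact: wj.
apply: wjv; rewrite ballEmdist /= phi_seq_rcons size_rcons exprS -!mulrA.
rewrite mulrCA (le_lt_trans (phi_lipschitz _ _ _)) // ltr_pM2l //.
by move: wy; rewrite ballEmdist.
Qed.

Lemma cylinder_extends k w : (n0 <= size w)%N -> In A f (size w) w ->
  exists2 v, size v = k & Aalpha A phi w `<=` Aalpha A phi (w ++ v).
Proof.
move=> n0w Inw; have [v sv wv] := ball_in_cylinder k n0w Inw.
exists v => // y Awy; apply/Aalpha_cat; split=> //.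
exact/wv/ball_rad_sub/phi_seq_ball.
Qed.

Lemma regular_order_regular x : regular_order A f n0 x -> regular A f x.
Proof.
move=> /regular_order_follows [w sw Fw] m.
have Awx : Aalpha A phi w x by apply/(followsE f_piece).
have [|v sv wv] := cylinder_extends m _ (follows_In Fw); first by rewrite sw.
have /(followsE f_piece)/follows_regular_order Rwv := wv x Awx.
by move=> j jm; apply: Rwv; rewrite size_cat sv (leq_trans jm) ?leq_addl.
Qed.

Lemma cylinder_split m w : (n0 <= size w)%N -> In A f (size w) w ->
  exists u v, [/\ size u = m, size v = size w &
    Aalpha A phi w `<=` Aalpha A phi (u ++ v)].
Proof.
move=> n0w Inw; have [v sv wv] := cylinder_extends m n0w Inw.
exists (take m (w ++ v)), (drop m (w ++ v)); rewrite cat_take_drop.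
by rewrite size_drop size_takel size_cat sv ?addnK ?leq_addl.
Qed.

Hypothesis n0_ge2 : (2 <= n0)%N.

Lemma iter_image_Cn m B : Cn A phi f n0 B ->
  exists2 B', Cn A phi f n0 B' & iter m f @` B `<=` B'.
Proof.
move=> /(CnP _ _ _ _ n0_ge2) [w Inw [-> [y0 Awy0]]].
have sw : size w = n0 := Inw.1; rewrite -sw in Inw.
have [u [v [su sv wuv]]] := cylinder_split m (eq_leq (esym sw)) Inw.
have /Aalpha_cat [_ Avy0] := wuv y0 Awy0.
exists (Aalpha A phi v); first exact: (Aalpha_Cn f_piece n0_ge2 (etrans sv sw) Avy0).
move=> _ [y Awy <-]; have /Aalpha_cat [Auy Avy] := wuv y Awy.
by rewrite -su (iter_Aalpha f_piece Auy).
Qed.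

Lemma closure_iter_image_Cn B m : Cn A phi f n0 B -> (n0 <= m)%N ->
  exists2 B', Cn A phi f n0 B' & closure (iter m f @` B) `<=` B'.
Proof.
move=> /(CnP _ _ _ _ n0_ge2) [w Inw [-> [y0 Awy0]]] n0m.
have sw : size w = n0 := Inw.1; rewrite -sw in Inw.
have [u [v [su _ wuv]]] := cylinder_split m (eq_leq (esym sw)) Inw.
have wu y : Aalpha A phi w y -> Aalpha A phi u y by move=> /wuv /Aalpha_cat [].
have [|v' sv' uv'] := ball_in_cylinder n0 _ (Aalpha_In f_piece (wu _ Awy0)).
  by rewrite su.
exists (Aalpha A phi v').
  by apply: (Aalpha_Cn f_piece n0_ge2 sv'); apply/uv'/ballxx; rewrite mulr_gt0.
have r2 : 0 < 2 * rad (size u) by rewrite mulr_gt0.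
apply: subset_trans (subset_trans _ (subset_closure_half r2)) uv'.
rewrite [2 * _]mulrC mulfK ?pnatr_eq0 //; apply: closureS => _ [y Awy <-].
by rewrite -su (iter_Aalpha f_piece (wu _ Awy)); exact: phi_seq_ball.
Qed.

Lemma Cn_strongly_invariant : strongly_invariant A f (Cn A phi f n0).
Proof.
split.
- exact: Cn_finite n0_ge2.
- by move=> B B'; apply: Cn_disjoint.
exists n0; first exact: leq_trans n0_ge2.
split; [exact: iter_image_Cn 1 | exact: closure_iter_image_Cn | exact: Cn_sub_piece].
Qed.

End Dynamics.

Lemma near_expr_mul_le {R : realType} (z c e : R) : 0 <= z < 1 -> 0 < c -> 0 < e ->
  \forall n \near \oo, z ^+ n * c <= e.
Proof.
case/andP=> z0 z1 c0 e0; have zn1 : `|z| < 1 by rewrite ger0_norm.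
near=> n; rewrite -ler_pdivlMr // -[z ^+ n]ger0_norm ?exprn_ge0 //.
by near: n; exact: cvgr0_norm_le _ (cvg_expr zn1) _ (divr_gt0 e0 c0).
Unshelve. all: by end_near.
Qed.

Theorem lemma3p6 (R : realType) (X : metricType R) (lam : R) (N : nat)
    (A : 'I_N -> set X) (phi : 'I_N -> X -> X) (f : X -> X) (x0 : X) :
  @standing_space R X -> 0 < lam < 1 ->
  piecewise_contraction lam A phi f ->
  Omega A phi f x0 `&` Sf A = set0 ->
  exists n : nat, (0 < n)%N /\
    (forall x, regular_order A f n x -> regular A f x) /\
    strongly_invariant A f (Cn A phi f n).
Proof.
move=> [cX balls_connected _] lam01 pcf OmS.
have pieces_open i : open (A i) by case: pcf => /(_ i) [].
have [D D_bound] := compact_mdist_bounded x0 cX.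
have {}D_bound x : mdist x0 x < D := D_bound x I.
have D_gt0 : 0 < D by rewrite (le_lt_trans _ (D_bound x0)) ?mdist_ge0.
have cSf : compact (Sf A).
  by rewrite -[Sf A]setTI; exact: compact_closedI (closed_Sf pieces_open).
have [M [eps eps_gt0 far]] := compact_far_from_limsup
  (P := fun n => [set phi_seq phi w x0 | w in In A f n]) cSf (etrans (setIC _ _) OmS).
have [n [Mn n2 small]] :
    exists n, [/\ (M <= n)%N, (2 <= n)%N & lam ^+ n * (2 * D) <= eps].
  near \oo => n; exists n; split; near: n; try exact: nbhs_infty_ge.
  by apply: near_expr_mul_le; rewrite ?mulr_gt0 //; case/andP: lam01 => /ltW -> ->.
have far_from_Sf w s : (n <= size w)%N -> In A f (size w) w -> Sf A s ->
    eps <= mdist (phi_seq phi w x0) s.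
  move=> nw Inw Ss; apply: (far (size w)) => //.
    exact: leq_trans Mn nw.
  by exists w.
rewrite mulrCA in small.
exists n; split; first exact: ltnW.
split.
  exact: (regular_order_regular lam01 pcf balls_connected D_bound far_from_Sf small).
exact: (Cn_strongly_invariant lam01 pcf balls_connected D_bound far_from_Sf small).
Unshelve. all: by end_near.
Qed.
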